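(* Let $(x_K)_{K\ge1}\subseteq\{0,1\}^{\mathbb Z}$ be a coordinatewise non-increasing sequence with coordinatewise limit $x_\infty$, and suppose $(x_K)$ is good: there is an increasing sequence $(N_i)$ such that for every $K\in\mathbb N\cup\{\infty\}$, $x_K$ is quasi-generic along $(N_i)$ for some measure $\nu_K$ (i.e. $\frac1{N_i}\sum_{n\le N_i}\delta_{\sigma^nx_K}\to\nu_K$ weakly), and $\nu_K(1)\to\nu_\infty(1)$ as $K\to\infty$. Then $\nu_K\to\nu_\infty$ weakly.
   Context: $\sigma$ is the left shift on $\{0,1\}^{\mathbb Z}$; for a measure $\mu$ on $\{0,1\}^{\mathbb Z}$, $\mu(1)=\mu(\{x:x_0=1\})$. *)

From HB Require Import structures.
From mathcomp Require Import all_boot all_order all_algebra.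
From mathcomp Require Import all_classical all_reals all_analysis.
Import Order.TTheory GRing.Theory Num.Theory.
Import numFieldNormedType.Exports.
Set Implicit Arguments.
Unset Strict Implicit.
Unset Printing Implicit Defensive.
Local Open Scope classical_set_scope.
Local Open Scope ring_scope.

(** The full shift {0,1}^Z, with 1 encoded as [true], with the product
    (pointwise-convergence) topology of discrete copies of [bool]. *)
Definition Omega : topologicalType := {ptws int -> bool}.

Definition BOmega := g_sigma_algebraType (@open Omega).

Definition shift (x : Omega) : Omega := fun n : int => x (n + 1).

(** The cylinder [x_0 = 1]; mu(1) := mu [set x | x_0 = 1]. *)
Definition cyl1 : set BOmega := [set x : BOmega | (x : int -> bool) 0 = true].

Definition integ {R : realType} (mu : probability BOmega R) (f : Omega -> R)
  : \bar R := (\int[mu]_(x in [set: BOmega]) (f x)%:E)%E.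

Definition quasi_generic {R : realType} (N : nat -> nat) (x : Omega)
  (nu : probability BOmega R) : Prop :=
  forall f : Omega -> R, continuous f ->
    (fun i => ((N i)%:R^-1 * \sum_(1 <= n < (N i).+1) f (iter n shift x))%:E)
      @ \oo --> integ nu f.

Definition weak_cvg {R : realType} (nu : nat -> probability BOmega R)
  (nu_inf : probability BOmega R) : Prop :=
  forall f : Omega -> R, continuous f ->
    (fun K => integ (nu K) f) @ \oo --> integ nu_inf f.

From Pilot Require Import Defs.
From HB Require Import structures.
From mathcomp Require Import all_boot all_order all_algebra.
From mathcomp Require Import all_classical all_reals all_analysis.
From mathcomp Require Import ring lra zify.
Import Order.TTheory GRing.Theory Num.Theory.
Import numFieldNormedType.Exports.

(* A continuous f on {0,1}^Z depends, up to d, only on a window [-M, M] of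
   coordinates, and is bounded by some C.  Since x_inf <= x_K coordinatewise,
   sigma^n x_K and sigma^n x_inf can disagree on the window around 0 only if
   the gap x_K - x_inf equals 1 somewhere in [n - M, n + M].  Summing over
   n <= N_i, the Birkhoff averages of f along x_K and x_inf differ by at most
   d + 2C(2M+1) times the difference of the Birkhoff averages of the
   indicator of [x_0 = 1], up to O(M / N_i).  Along (N_i) this gives
   |nu_K(f) - nu_inf(f)| <= d + 2C(2M+1) (nu_K(1) - nu_inf(1)), and the
   right-hand side tends to d as K grows. *)

Set Implicit Arguments.
Unset Strict Implicit.
Unset Printing Implicit Defensive.
Local Open Scope classical_set_scope.
Local Open Scope ring_scope.

Definition window_eq (M : nat) (x y : Omega) : Prop :=
  forall j : int, `|j| <= M%:Z -> (x : int -> bool) j = (y : int -> bool) j.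

Lemma Omega_compact : compact [set: Omega].
Proof.
have := @tychonoff int (fun _ => bool) (fun _ => setT) (fun _ => bool_compact).
by rewrite /Omega; congr compact; apply/seteqP; split.
Qed.

Lemma nbhs_coord (z : Omega) (j : int) :
  nbhs z [set w : Omega | (w : int -> bool) j = (z : int -> bool) j].
Proof.
apply: (@proj_continuous int (fun _ => bool) j z [set (z : int -> bool) j]).
by rewrite nbhs_principalE.
Qed.

Lemma continuous_coord (R : realType) (j : int) :
  continuous (fun x : Omega => (((x : int -> bool) j)%:R : R)).
Proof.
move=> z A nA; apply: filterS (nbhs_coord z j) => w /= ->.
exact: nbhs_singleton.
Qed.

Lemma Omega_continuous_bounded (R : realType) (f : Omega -> R) : continuous f ->
  exists2 C : R, 0 <= C & forall x, `|f x| <= C.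
Proof.
move=> fc.
have cI : compact (f @` [set: Omega]).
  by apply: continuous_compact Omega_compact; apply: continuous_subspaceT.
have [M [Mr HM]] := compact_bounded cI.
exists (`|M| + 1); first by rewrite addr_ge0.
move=> x; apply: (HM (`|M| + 1)); last by exists x.
by rewrite (le_lt_trans (real_ler_norm Mr)) // ltrDl.
Qed.

(* Heine-Cantor on the compact space Omega, with the cylinder uniformity:
   a counterexample sequence of pairs agreeing on ever larger windows has a
   cluster point on the diagonal, where continuity of f is contradicted. *)
Lemma Omega_uniform_continuity (R : realType) (f : Omega -> R) : continuous f ->
  forall d : R, 0 < d -> exists M : nat, forall x y : Omega,
    window_eq M x y -> `|f x - f y| <= d.
Proof.
move=> fc d d0; apply/not_existsP => Hn.
have /choice [p Hp] : forall M : nat, exists p : Omega * Omega,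
    window_eq M p.1 p.2 /\ d < `|f p.1 - f p.2|.
  move=> M; have /existsNP [x /existsNP [y /not_implyP [H1 H2]]] := Hn M.
  by exists (x, y); split => //; rewrite ltNge; apply/negP.
have PF : ProperFilter (p @ \oo) by apply: fmap_proper_filter.
have pT : (p @ \oo) ([set: Omega] `*` [set: Omega]) by rewrite setXTT; apply: filterT.
have [z [_ cz]] := compact_setX Omega_compact Omega_compact PF pT.
have frequently : forall B, nbhs z B -> forall K, exists2 M, (K <= M)%N & B (p M).
  move=> B nB K.
  have FA : (p @ \oo) (p @` [set M | (K <= M)%N]) by exists K => // M KM; exists M.
  by have [q [[M /= KM <-] Bq]] := cz _ _ FA nB; exists M.
have z_diag : z.1 = z.2.
  apply: functional_extensionality_dep => j; apply/eqP/negPn/negP => Hj.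
  have nB : nbhs z (fun q : Omega * Omega =>
      (q.1 : int -> bool) j = (z.1 : int -> bool) j /\
      (q.2 : int -> bool) j = (z.2 : int -> bool) j).
    exists ([set w : Omega | (w : int -> bool) j = (z.1 : int -> bool) j],
            [set w : Omega | (w : int -> bool) j = (z.2 : int -> bool) j]).
      by split; apply: nbhs_coord.
    by case=> a b [/= -> ->].
  have [M jM [E1 E2]] := frequently _ nB `|j|%N.
  by move: Hj; rewrite -E1 -E2 (proj1 (Hp M)) ?eqxx //; lia.
have d2 : 0 < d / 2 by rewrite divr_gt0.
have nB : nbhs z (fun q : Omega * Omega =>
    `|f z.1 - f q.1| < d / 2 /\ `|f z.2 - f q.2| < d / 2).
  exists ([set w : Omega | `|f z.1 - f w| < d / 2],
          [set w : Omega | `|f z.2 - f w| < d / 2]).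
    by split; [move/cvgrPdist_lt : (fc z.1); apply | move/cvgrPdist_lt : (fc z.2); apply].
  by case=> a b [/= Ha Hb].
have [M _ [E1 E2]] := frequently _ nB 0%N.
have := proj2 (Hp M); rewrite ltNge => /negP; apply.
rewrite -z_diag in E2.
have -> : f (p M).1 - f (p M).2 = (f z.1 - f (p M).2) - (f z.1 - f (p M).1) by ring.
by apply: le_trans (ler_normB _ _) _; rewrite [d]splitr lerD // ltW.
Qed.

Lemma iter_shiftE (n : nat) (z : Omega) (m : int) :
  (@iter Omega n Defs.shift z : int -> bool) m = (z : int -> bool) (m + n%:Z).
Proof.
elim: n m => [|n IH] m /=; first by rewrite addr0.
by rewrite /Defs.shift IH -addrA intS [1 + _]addrC.
Qed.

Definition birkhoff_avg {R : realType} (h : Omega -> R) (n : nat) (z : Omega) : R :=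
  n%:R^-1 * \sum_(1 <= k < n.+1) h (@iter Omega k Defs.shift z).

Definition indic_cyl1 {R : realType} (w : Omega) : R := ((w : int -> bool) 0)%:R.

Lemma measurable_cyl1 : measurable cyl1.
Proof.
apply: sub_sigma_algebra; rewrite openE => x x0; rewrite /interior.
by apply: filterS (nbhs_coord x 0) => w /= E; rewrite /cyl1 /= E.
Qed.

Lemma integ_indic_cyl1 (R : realType) (mu : probability BOmega R) :
  integ mu indic_cyl1 = mu cyl1.
Proof.
rewrite /integ -[mu cyl1](congr1 mu (setIT cyl1)).
rewrite -integral_indic //; last exact: measurable_cyl1.
apply: eq_integral => x _; congr (_%:E); rewrite indicE /indic_cyl1.
case E: ((x : int -> bool) 0).
- by rewrite mem_set.
- by rewrite memNset //= /cyl1 /= E.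
Qed.

Section WindowSums.
Variables (R : realType) (D : int -> R).
Hypothesis D01 : forall z, 0 <= D z <= 1.

Lemma sum_translate1 (N : nat) (t : int) :
  \sum_(1 <= n < N.+1) D (n%:Z + (t + 1)) + D (1 + t) =
  \sum_(1 <= n < N.+1) D (n%:Z + t) + D (N.+1%:Z + t).
Proof.
rewrite -big_nat_recr //= [RHS]big_ltn // [in RHS]big_add1 addrC.
by congr (_ + _); apply: eq_bigr => n _; congr D; lia.
Qed.

(* Translating a window of [0,1]-valued terms changes its sum by at most the
   length of the translation: each unit step trades one term for another. *)
Lemma sum_translate_le (N m : nat) (t : int) : `|t| <= m%:Z ->
  \sum_(1 <= n < N.+1) D (n%:Z + t) <= \sum_(1 <= n < N.+1) D n%:Z + m%:R.
Proof.
have step t' := sum_translate1 N t'.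
have [D1 DN] := (fun t' => D01 (1 + t'), fun t' => D01 (N.+1%:Z + t')).
elim: m t => [|m IH] t ht.
  have -> : t = 0 by apply/eqP; rewrite -normr_le0.
  by under eq_bigr do rewrite addr0; rewrite addr0.
rewrite -natr1; have [t0|t0|->] := ltgtP t 0.
- have := IH (t + 1) ltac:(lia); have := step t.
  by case/andP: (D1 t) => *; case/andP: (DN t) => *; lra.
- have := IH (t - 1) ltac:(lia); have := step (t - 1); rewrite subrK.
  by case/andP: (D1 (t - 1)) => *; case/andP: (DN (t - 1)) => *; lra.
- under eq_bigr do rewrite addr0.
  by rewrite lerDl addr_ge0.
Qed.

Lemma sum_window_le (N M : nat) :
  \sum_(1 <= n < N.+1) \sum_(k < (2 * M).+1) D (n%:Z + (k%:Z - M%:Z)) <=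
  (2 * M).+1%:R * (\sum_(1 <= n < N.+1) D n%:Z + M%:R).
Proof.
rewrite exchange_big /=.
apply: (@le_trans _ _ (\sum_(k < (2 * M).+1) (\sum_(1 <= n < N.+1) D n%:Z + M%:R))).
  by apply: ler_sum => k _; apply: sum_translate_le; move: (ltn_ord k); lia.
by rewrite sumr_const card_ord mulr_natl.
Qed.

End WindowSums.

Definition coord_le (x y : Omega) : Prop :=
  forall m : int, (x : int -> bool) m ==> (y : int -> bool) m.

Definition coord_gap {R : realType} (xa xb : Omega) (m : int) : R :=
  ((xa : int -> bool) m)%:R - ((xb : int -> bool) m)%:R.

Section ShiftComparison.
Variables (R : realType) (f : Omega -> R) (C d : R) (M : nat) (xa xb : Omega).
Hypothesis f_le : forall w, `|f w| <= C.
Hypothesis f_window : forall x y, window_eq M x y -> `|f x - f y| <= d.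
Hypothesis xb_le_xa : coord_le xb xa.

Let gap : int -> R := coord_gap xa xb.
Let window_gap (n : nat) : R := \sum_(k < (2 * M).+1) gap (n%:Z + (k%:Z - M%:Z)).

Lemma coord_gap01 z : 0 <= gap z <= 1.
Proof.
rewrite /gap /coord_gap; move: (xb_le_xa z).
by case: ((xa : int -> bool) z); case: ((xb : int -> bool) z) => //= _;
  rewrite ?subrr ?subr0 ?lexx ?ler01.
Qed.

Lemma window_gap_ge0 n : 0 <= window_gap n.
Proof. by apply: sumr_ge0 => k _; case/andP: (coord_gap01 (n%:Z + (k%:Z - M%:Z))). Qed.

(* Either the shifted points agree on the window, and f moves by at most d,
   or some coordinate of the window differs, and the gap sum pays for 2C. *)
Lemma shift_dist_le (n : nat) :
  `|f (@iter Omega n Defs.shift xa) - f (@iter Omega n Defs.shift xb)| <=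
  d + 2 * C * window_gap n.
Proof.
have C0 : 0 <= C by apply: le_trans (f_le xa).
have d0 : 0 <= d by have := @f_window xa xa (fun j _ => erefl); rewrite subrr normr0.
set ya := @iter Omega n Defs.shift xa; set yb := @iter Omega n Defs.shift xb.
have [agree | /forallPn [k neq]] := boolP [forall k : 'I_(2 * M).+1,
    (xa : int -> bool) (n%:Z + (k%:Z - M%:Z)) == (xb : int -> bool) (n%:Z + (k%:Z - M%:Z))].
- apply: (@le_trans _ _ d); last by rewrite lerDl !mulr_ge0 ?window_gap_ge0.
  apply: f_window => j hj; rewrite /ya /yb !iter_shiftE.
  have hk : (absz (j + M%:Z)%R < (2 * M).+1)%N by lia.
  move/forallP/(_ (Ordinal hk))/eqP: agree => /=.
  by have -> : n%:Z + ((absz (j + M%:Z)%R)%:Z - M%:Z) = j + n%:Z by lia.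
- have gap_k : gap (n%:Z + (k%:Z - M%:Z)) = 1.
    rewrite /gap /coord_gap; move: neq (xb_le_xa (n%:Z + (k%:Z - M%:Z))).
    by case: (xa _); case: (xb _) => //= _ _; rewrite subr0.
  have : 1 <= window_gap n.
    rewrite /window_gap (bigD1 k) //= gap_k lerDl; apply: sumr_ge0 => i _.
    by case/andP: (coord_gap01 (n%:Z + (i%:Z - M%:Z))).
  move=> /(ler_wpM2l (_ : 0 <= 2 * C)); rewrite mulr1 => /(_ ltac:(lra)) two_C_le.
  by have := ler_normB (f ya) (f yb); have := f_le ya; have := f_le yb; lra.
Qed.

Lemma sum_gap_indic_cyl1 (n : nat) :
  \sum_(1 <= k < n.+1) gap k%:Z =
  \sum_(1 <= k < n.+1) indic_cyl1 (@iter Omega k Defs.shift xa) -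
  \sum_(1 <= k < n.+1) indic_cyl1 (@iter Omega k Defs.shift xb).
Proof. by rewrite -sumrB; apply: eq_bigr => k _; rewrite /indic_cyl1 !iter_shiftE add0r. Qed.

Lemma birkhoff_avg_gap_le (n : nat) : (0 < n)%N ->
  `|birkhoff_avg f n xa - birkhoff_avg f n xb| <=
  d + 2 * C * (2 * M).+1%:R *
    (birkhoff_avg indic_cyl1 n xa - birkhoff_avg indic_cyl1 n xb)
  + 2 * C * (2 * M).+1%:R * M%:R / n%:R.
Proof.
move=> n0; have C0 : 0 <= C by apply: le_trans (f_le xa).
have sum_le : `|\sum_(1 <= k < n.+1) (f (@iter Omega k Defs.shift xa) -
                                     f (@iter Omega k Defs.shift xb))| <=
    n%:R * d + 2 * C * ((2 * M).+1%:R * (\sum_(1 <= k < n.+1) gap k%:Z + M%:R)).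
  apply: le_trans (ler_norm_sum _ _ _) _.
  apply: le_trans (ler_sum _ (fun k _ => shift_dist_le k)) _.
  rewrite big_split /= sumr_const_nat subn1 /= -mulr_sumr -[d *+ n]mulr_natl lerD2l.
  by apply: ler_wpM2l; [rewrite mulr_ge0 | apply: sum_window_le; exact: coord_gap01].
rewrite /birkhoff_avg -!mulrBr -sumrB normrM ger0_norm ?invr_ge0 //.
rewrite sum_gap_indic_cyl1 in sum_le.
have n_gt0 : 0 < n%:R :> R by rewrite ltr0n.
apply: le_trans (ler_wpM2l (_ : 0 <= n%:R^-1) sum_le) _; first by rewrite invr_ge0 ltW.
by rewrite le_eqVlt; apply/orP; left; apply/eqP; field; rewrite gt_eqF.
Qed.

End ShiftComparison.

Lemma homo_ltn_infl (N : nat -> nat) : {homo N : i j / (i < j)%N} ->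
  forall i, (i <= N i)%N.
Proof. by move=> hN; elim=> [|i IH] //; apply: leq_ltn_trans IH (hN _ _ (ltnSn i)). Qed.

Section QuasiGeneric.
Variable R : realType.

Lemma norm_birkhoff_avg_le (h : Omega -> R) (C : R) (n : nat) (z : Omega) :
  (forall w, `|h w| <= C) -> `|birkhoff_avg h n z| <= C.
Proof.
move=> hC; have C0 : 0 <= C by apply: le_trans (hC z).
case: n => [|n]; first by rewrite /birkhoff_avg invr0 mul0r normr0.
rewrite /birkhoff_avg normrM ger0_norm ?invr_ge0 // ler_pdivrMl ?ltr0n //.
apply: le_trans (ler_norm_sum _ _ _) _.
apply: le_trans (ler_sum _ (fun k _ => hC _)) _.
by rewrite sumr_const_nat subn1 mulr_natl.
Qed.

Lemma cvg_EFin_bounded (a : nat -> R) (C : R) (l : \bar R) :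
  (forall i, `|a i| <= C) -> (fun i => (a i)%:E) @ \oo --> l ->
  l = (fine l)%:E /\ a @ \oo --> fine l.
Proof.
move=> aC; case: l => [r /fine_cvg//|/cvgeyPge|/cvgeNyPle].
- move=> /(_ (C + 1)) [K _ /(_ K (leqnn K))]; rewrite lee_fin => aK.
  by exfalso; have /ler_normlP[] := aC K; lra.
- move=> /(_ (- C - 1)) [K _ /(_ K (leqnn K))]; rewrite lee_fin => aK.
  by exfalso; have /ler_normlP[] := aC K; lra.
Qed.

Lemma cvg_inv_increasing (N : nat -> nat) : {homo N : i j / (i < j)%N} ->
  (fun i => (N i)%:R^-1 : R) @ \oo --> 0.
Proof.
move=> hN.
apply/cvgrPdist_le => e e0; exists (Num.truncn e^-1).+1 => // i /= hi.
rewrite sub0r normrN ger0_norm ?invr_ge0 //.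
have einv_lt : e^-1 < (N i)%:R.
  by apply: lt_le_trans (truncnS_gt _) _; rewrite ler_nat (leq_trans hi (homo_ltn_infl hN i)).
have N_gt0 : 0 < (N i)%:R :> R by apply: lt_trans einv_lt; rewrite invr_gt0.
by rewrite -[e]invrK lef_pV2 ?posrE ?invr_gt0 // ltW.
Qed.

Lemma quasi_generic_cvg (N : nat -> nat) (z : Omega) (nu : probability BOmega R)
    (f : Omega -> R) : quasi_generic N z nu -> continuous f ->
  integ nu f = (fine (integ nu f))%:E /\
  (fun i => birkhoff_avg f (N i) z) @ \oo --> fine (integ nu f).
Proof.
move=> qg fc; have [C _ fC] := Omega_continuous_bounded fc.
exact: cvg_EFin_bounded (fun i => norm_birkhoff_avg_le _ _ fC) (qg f fc).
Qed.

End QuasiGeneric.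

Lemma quasi_generic_integ_gap_le (R : realType) (N : nat -> nat) (f : Omega -> R)
    (d : R) : {homo N : i j / (i < j)%N} -> continuous f -> 0 < d ->
  exists2 A : R, 0 <= A & forall (xa xb : Omega) (nua nub : probability BOmega R),
    coord_le xb xa -> quasi_generic N xa nua -> quasi_generic N xb nub ->
    `|fine (integ nua f) - fine (integ nub f)| <=
    d + A * (fine (nua cyl1) - fine (nub cyl1)).
Proof.
move=> hN fc d0; have [C C0 fC] := Omega_continuous_bounded fc.
have [M f_window] := Omega_uniform_continuity fc d0.
set A := 2 * C * (2 * M).+1%:R; exists A; first by rewrite !mulr_ge0.
move=> xa xb nua nub xb_le_xa qa qb.
have indic_cont : continuous (@indic_cyl1 R) := @continuous_coord R 0.
have [_ fa] := quasi_generic_cvg qa fc; have [_ fb] := quasi_generic_cvg qb fc.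
have [_ ga] := quasi_generic_cvg qa indic_cont.
have [_ gb] := quasi_generic_cvg qb indic_cont.
rewrite !integ_indic_cyl1 in ga gb.
have lhs_cvg : (fun i => `|birkhoff_avg f (N i) xa - birkhoff_avg f (N i) xb|) @ \oo
    --> `|fine (integ nua f) - fine (integ nub f)|.
  exact: cvg_norm (cvgB fa fb).
have rhs_cvg : (fun i => d + A * (birkhoff_avg indic_cyl1 (N i) xa -
      birkhoff_avg indic_cyl1 (N i) xb) + A * M%:R * (N i)%:R^-1) @ \oo -->
    d + A * (fine (nua cyl1) - fine (nub cyl1)) + A * M%:R * 0.
  apply: cvgD; last exact: cvgMl_tmp (cvg_inv_increasing hN).
  by apply: cvgD; [exact: cvg_cst | exact: cvgMl_tmp (cvgB ga gb)].
rewrite mulr0 addr0 in rhs_cvg; apply: (ler_cvg_to lhs_cvg rhs_cvg).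
exists 1%N => // i /= i_ge1.
have N_gt0 : (0 < N i)%N := leq_trans i_ge1 (homo_ltn_infl hN i).
exact (birkhoff_avg_gap_le fC f_window xb_le_xa N_gt0).
Qed.

Lemma cvg_of_gap_bound (R : realFieldType) (a b : nat -> R) (a0 b0 : R) :
  b @ \oo --> b0 ->
  (forall d, 0 < d -> exists2 A, 0 <= A & forall K, `|a K - a0| <= d + A * (b K - b0)) ->
  a @ \oo --> a0.
Proof.
move=> b_cvg gap_le; apply/cvgrPdist_le => e e0.
have [A A0 aK_le] := gap_le (e / 2) ltac:(by rewrite divr_gt0).
have eA : 0 < e / 2 / (A + 1) by rewrite !divr_gt0 // ltr_wpDl.
move/cvgrPdist_le/(_ _ eA): b_cvg; apply: filterS => K /= bK_le.
rewrite distrC; apply: le_trans (aK_le K) _.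
have : A * (b K - b0) <= A * (e / 2 / (A + 1)).
  by rewrite ler_wpM2l // (le_trans (ler_norm _)) // distrC.
have : A * (e / 2 / (A + 1)) <= e / 2.
  by rewrite mulrA ler_pdivrMr ?ltr_wpDl // mulrC ler_wpM2l ?ltW //; lra.
lra.
Qed.

Lemma nonincreasing_bool_le_lim (y : nat -> bool) (b : bool) :
  (forall K, y K.+1 ==> y K) -> (\forall K \near \oo, y K = b) -> forall K, b ==> y K.
Proof.
move=> y_step [K0 _ y_eq] K.
have y_mono : {homo y : i j / (i <= j)%N >-> j ==> i}.
  by apply: homo_leq => [u | u v w | //]; [exact: implybb | case: u; case: v; case: w].
by rewrite -(y_eq (maxn K K0) (leq_maxr _ _)); apply: y_mono; exact: leq_maxl.
Qed.

Theorem lemma3p8 (R : realType) (x : nat -> Omega) (x_inf : Omega)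
  (N : nat -> nat) (nu : nat -> probability BOmega R)
  (nu_inf : probability BOmega R) :
  (forall (K : nat) (n : int), (x K.+1 : int -> bool) n ==> (x K : int -> bool) n) ->
  (forall n : int, \forall K \near \oo, (x K : int -> bool) n = (x_inf : int -> bool) n) ->
  {homo N : i j / (i < j)%N} ->
  (forall K : nat, quasi_generic N (x K) (nu K)) ->
  quasi_generic N x_inf nu_inf ->
  (fun K => nu K cyl1) @ \oo --> nu_inf cyl1 ->
  weak_cvg nu nu_inf.
Proof.
move=> x_step x_lim hN qg qg_inf nu_cyl1 f fc.
have x_inf_le K : coord_le x_inf (x K).
  by move=> n; apply: nonincreasing_bool_le_lim (x_lim n) K => K'; exact: x_step.
have cyl1_fin (mu : probability BOmega R) : mu cyl1 = (fine (mu cyl1))%:E.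
  by rewrite fineK // fin_num_measure //; exact: measurable_cyl1.
have fine_nu_cyl1 : (fun K => fine (nu K cyl1)) @ \oo --> fine (nu_inf cyl1).
  by apply: fine_cvg; rewrite -cyl1_fin.
rewrite (proj1 (quasi_generic_cvg qg_inf fc)); apply: cvg_EFin.
  by apply: nearW => K; rewrite (proj1 (quasi_generic_cvg (qg K) fc)).
apply: cvg_of_gap_bound fine_nu_cyl1 _ => d d0.
have [A A0 integ_gap_le] := quasi_generic_integ_gap_le hN fc d0.
by exists A => // K; exact: integ_gap_le (x_inf_le K) (qg K) qg_inf.
Qed.
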